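(* Let $h:(a,b)\to\mathbb{R}$ and $g:(c,d)\to\mathbb{R}$ be real analytic (not identically zero), where $(c,d)$ contains the image of $h$ and each interval is bounded or unbounded. Assume that the function \[x\mapsto\frac{\kappa(h,x)+\kappa(g,h(x))}{1+\kappa(g\circ h,x)},\qquad\text{with the rule }\tfrac{\infty}{\infty}=1,\] is bounded on $(a,b)$. Then $g$ and $h$ are compatible.
   Context: For a real analytic function $f$ on an open interval, not identically zero, the condition number is $\kappa(f,x)=0$ if $x=0$, $\kappa(f,x)=\infty$ if $x\neq0$ and $f(x)=0$, and $\kappa(f,x)=|x|\,|f'(x)|/|f(x)|$ otherwise; set $\mu(f,x)=1+\kappa(f,x)$. Two such functions $h:(a,b)\to\mathbb{R}$, $g:(c,d)\to\mathbb{R}$ with $h((a,b))\subseteq(c,d)$ are called compatible if there is a constant $C>0$ such that $\mu(g,h(x))\,\mu(h,x)\leq C\,\mu(g\circ h,x)$ for all $x\in(a,b)$ (with the rule $\infty/\infty=1$ when this is read as boundedness of the ratio). *)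

From Stdlib Require Import Reals.
From Coquelicot Require Import Coquelicot.
Open Scope R_scope.

Definition in_oint (a b : Rbar) (x : R) : Prop := Rbar_lt a x /\ Rbar_lt x b.

Definition real_analytic_on (a b : Rbar) (f : R -> R) : Prop :=
  forall x0, in_oint a b x0 ->
    exists r : R, 0 < r /\ exists c : nat -> R,
      forall x, Rabs (x - x0) < r -> is_pseries c (x - x0) (f x).

Definition not_ident_zero (a b : Rbar) (f : R -> R) : Prop :=
  exists x, in_oint a b x /\ f x <> 0.

Definition kappa (f : R -> R) (x : R) : Rbar :=
  if Req_EM_T x 0 then Finite 0
  else if Req_EM_T (f x) 0 then p_infty
  else Finite (Rabs x * Rabs (Derive f x) / Rabs (f x)).

Definition mu (f : R -> R) (x : R) : Rbar := Rbar_plus (Finite 1) (kappa f x).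

(* Quotient N / D of extended nonnegative reals with D >= 1,
   using the rule oo/oo = 1 (and finite/oo = 0). *)
Definition ratio_inf (N D : Rbar) : Rbar :=
  match D with
  | Finite d => Rbar_div N d
  | p_infty => match N with p_infty => Finite 1 | _ => Finite 0 end
  | m_infty => Finite 0
  end.

Definition compatible (a b c d : Rbar) (h g : R -> R) : Prop :=
  exists C : R, 0 < C /\
    forall x, in_oint a b x ->
      Rbar_le (Rbar_mult (mu g (h x)) (mu h x))
              (Rbar_mult (Finite C) (mu (fun y => g (h y)) x)).

From Stdlib Require Import Reals Lra.
From Coquelicot Require Import Coquelicot.
Open Scope R_scope.

(* Write k_h = kappa(h,x), k_g = kappa(g,h x) and k = kappa(g o h,x). When all
   three are finite, the chain rule gives k = k_g k_h, hence
   mu(g,h x) mu(h,x) = (1 + k) + (k_h + k_g) <= (1 + |M|) (1 + k) by the bounded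
   ratio. If k is infinite the right-hand side is infinite, and if k is finite
   while k_h or k_g is infinite the ratio would be infinite. Analyticity is only
   used to make h and g differentiable. *)

Lemma ex_pseries_le_CV_radius (c : nat -> R) (z : R) :
  ex_pseries c z -> Rbar_le (Rabs z) (CV_radius c).
Proof.
  intros Hs. apply Rbar_not_lt_le. intros Hlt.
  apply (CV_disk_outside c z Hlt), ex_series_lim_0.
  eapply ex_series_ext; [|exact Hs]. intros n.
  cbv beta. rewrite pow_n_pow. apply Rmult_comm.
Qed.

Lemma real_analytic_on_ex_derive (a b : Rbar) (f : R -> R) (x0 : R) :
  real_analytic_on a b f -> in_oint a b x0 -> ex_derive f x0.
Proof.
  intros Hf Hx. destruct (Hf x0 Hx) as [r [Hr [c Hc]]].
  assert (Hrad : Rbar_lt 0 (CV_radius c)).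
  { apply Rbar_lt_le_trans with (Rabs (r / 2)).
    - simpl. rewrite Rabs_pos_eq; lra.
    - assert (Hz : Rabs (x0 + r / 2 - x0) < r).
      { replace (x0 + r / 2 - x0) with (r / 2) by ring. rewrite Rabs_pos_eq; lra. }
      pose proof (Hc _ Hz) as Hs.
      replace (x0 + r / 2 - x0) with (r / 2) in Hs by ring.
      apply ex_pseries_le_CV_radius. eexists. exact Hs. }
  apply ex_derive_ext_loc with (f := fun y => PSeries c (y - x0)).
  { exists (mkposreal r Hr). intros y Hy. apply is_pseries_unique, Hc, Hy. }
  apply (ex_derive_comp (PSeries c) (fun y => y - x0)).
  - apply ex_derive_PSeries. rewrite Rminus_diag, Rabs_R0. exact Hrad.
  - auto_derive. auto.
Qed.

Lemma kappa_ge0 (f : R -> R) (x : R) : Rbar_le 0 (kappa f x).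
Proof.
  unfold kappa.
  destruct (Req_EM_T x 0); [simpl; lra|].
  destruct (Req_EM_T (f x) 0); [exact I|].
  simpl. apply Rdiv_le_0_compat.
  - apply Rmult_le_pos; apply Rabs_pos.
  - now apply Rabs_pos_lt.
Qed.

(* The finiteness hypotheses matter: if [x <> 0], [h x = 0] and [g 0 <> 0],
   then [kappa h x = p_infty] and [kappa g 0 = 0], while [kappa (g o h) x] is
   finite and possibly nonzero. *)
Lemma kappa_comp (g h : R -> R) (x kh kg k : R) :
  ex_derive h x -> ex_derive g (h x) ->
  kappa h x = Finite kh -> kappa g (h x) = Finite kg ->
  kappa (fun y => g (h y)) x = Finite k -> k = kg * kh.
Proof.
  intros Dh Dg. unfold kappa.
  destruct (Req_EM_T x 0); [intros [= <-] _ [= <-]; ring|].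
  destruct (Req_EM_T (h x) 0); [discriminate|].
  destruct (Req_EM_T (g (h x)) 0); [discriminate|].
  intros [= <-] [= <-] [= <-].
  rewrite (Derive_comp g h x Dg Dh), Rabs_mult. field.
  split; now apply Rabs_no_R0.
Qed.

Lemma prod_one_add_le_of_ratio_le (kh kg M : R) :
  0 <= kh -> 0 <= kg -> (kh + kg) / (1 + kg * kh) <= M ->
  (1 + kg) * (1 + kh) <= (1 + Rabs M) * (1 + kg * kh).
Proof.
  intros Hh Hg HM.
  assert (Hd : 0 < 1 + kg * kh) by nra.
  apply Rle_div_l in HM; [|exact Hd].
  assert (M * (1 + kg * kh) <= Rabs M * (1 + kg * kh)).
  { apply Rmult_le_compat_r; [lra|apply Rle_abs]. }
  nra.
Qed.

Lemma Rbar_div_p_infty (d : R) : 0 < d -> Rbar_div p_infty d = p_infty.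
Proof.
  intros Hd. apply is_Rbar_mult_unique, is_Rbar_mult_p_infty_pos.
  simpl. now apply Rinv_0_lt_compat.
Qed.

Lemma Rbar_mult_p_infty (c : R) : 0 < c -> Rbar_mult c p_infty = p_infty.
Proof.
  intros Hc. rewrite Rbar_mult_comm.
  now apply is_Rbar_mult_unique, is_Rbar_mult_p_infty_pos.
Qed.

Lemma mu_mult_le_of_ratio_le (kh kg k : Rbar) (M : R) :
  Rbar_le 0 kh -> Rbar_le 0 kg -> Rbar_le 0 k ->
  (forall rh rg r, kh = Finite rh -> kg = Finite rg -> k = Finite r -> r = rg * rh) ->
  Rbar_le (Rbar_abs (ratio_inf (Rbar_plus kh kg) (Rbar_plus 1 k))) M ->
  Rbar_le (Rbar_mult (Rbar_plus 1 kg) (Rbar_plus 1 kh))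
          (Rbar_mult (Finite (1 + Rabs M)) (Rbar_plus 1 k)).
Proof.
  intros Hh Hg Hk Hmul HM.
  destruct k as [r| |].
  - assert (Hd : 0 < 1 + r) by (simpl in Hk; lra).
    destruct kh as [rh| |], kg as [rg| |]; try contradiction;
      cbn [ratio_inf Rbar_plus Rbar_plus'] in HM;
      try (rewrite Rbar_div_p_infty in HM; [contradiction|exact Hd]).
    rewrite (Hmul rh rg r eq_refl eq_refl eq_refl) in HM |- *.
    apply prod_one_add_le_of_ratio_le; [exact Hh|exact Hg|].
    eapply Rle_trans; [apply Rle_abs|exact HM].
  - cbn [Rbar_plus Rbar_plus'].
    rewrite Rbar_mult_p_infty; [|pose proof (Rabs_pos M); lra].
    destruct (Rbar_mult _ _); exact I.
  - contradiction.
Qed.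

Theorem proposition5 (a b c d : Rbar) (h g : R -> R) :
  real_analytic_on a b h -> not_ident_zero a b h ->
  real_analytic_on c d g -> not_ident_zero c d g ->
  (forall x, in_oint a b x -> in_oint c d (h x)) ->
  (exists M : R, forall x, in_oint a b x ->
     Rbar_le (Rbar_abs (ratio_inf (Rbar_plus (kappa h x) (kappa g (h x)))
                                  (Rbar_plus (Finite 1) (kappa (fun y => g (h y)) x))))
             (Finite M)) ->
  compatible a b c d h g.
Proof.
  intros Hh _ Hg _ Him [M HM].
  exists (1 + Rabs M). split; [pose proof (Rabs_pos M); lra|].
  intros x Hx.
  apply mu_mult_le_of_ratio_le; [apply kappa_ge0 ..| |exact (HM x Hx)].
  intros kh kg k. apply kappa_comp.
  - exact (real_analytic_on_ex_derive a b h x Hh Hx).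
  - exact (real_analytic_on_ex_derive c d g (h x) Hg (Him x Hx)).
Qed.
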